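(* Let $G$ be an infinite group acting on a set $X$ on the left, and let $\mathfrak{F}$ be a family of subsets of $X$ that is $G$-invariant and upward directed. Then $\mathfrak{F}$ is $\mathfrak{F}$-packing large if and only if, for every $A\in\mathfrak{F}$, the set $\Delta_{\mathfrak{F}}(A)=\{g\in G: gA\cap A\in\mathfrak{F}\}$ is a Ramsey $(-1,1)$-product subset of $G$.
   Context: $\mathfrak{F}$ is $G$-invariant if $A\in\mathfrak{F}$, $g\in G$ imply $gA\in\mathfrak{F}$; upward directed if $A\in\mathfrak{F}$, $A\subseteq C\subseteq X$ imply $C\in\mathfrak{F}$. (Under these assumptions $\{g: gB\subseteq A$ for some $B\in\mathfrak{F}, B\subseteq A\}=\{g: gA\cap A\in\mathfrak{F}\}$.) A family $\mathfrak{F}'$ of subsets of $X$ is $\mathfrak{F}$-disjoint if $A\cap B\notin\mathfrak{F}$ for all distinct $A,B\in\mathfrak{F}'$. A family $\mathfrak{F}'$ is $\mathfrak{F}$-packing large if for each $A\in\mathfrak{F}'$ every $\mathfrak{F}$-disjoint family of sets of the form $gA$, $g\in G$, is finite. A subset $R\subseteq G$ is a Ramsey $(-1,1)$-product subset if every infinite $Y\subseteq G$ contains distinct $y_1,y_2$ with $y_1^{-1}y_2\in R$ and $y_2^{-1}y_1\in R$. *)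

From Stdlib Require Import List.
Set Implicit Arguments.

Definition is_group (G : Type) (mul : G -> G -> G) (inv : G -> G) (e : G) : Prop :=
  (forall a b c, mul (mul a b) c = mul a (mul b c)) /\
  (forall a, mul e a = a) /\ (forall a, mul a e = a) /\
  (forall a, mul (inv a) a = e) /\ (forall a, mul a (inv a) = e).

Definition is_left_action (G X : Type) (mul : G -> G -> G) (e : G)
  (act : G -> X -> X) : Prop :=
  (forall x, act e x = x) /\ (forall g h x, act (mul g h) x = act g (act h x)).

Definition finite_set (T : Type) (S : T -> Prop) : Prop :=
  exists l : list T, forall t, S t -> In t l.
Definition infinite_type (T : Type) : Prop := ~ exists l : list T, forall t, In t l.

Definition set_eq (X : Type) (A B : X -> Prop) : Prop := forall x, A x <-> B x.

Definition finite_family (X : Type) (Fm : (X -> Prop) -> Prop) : Prop :=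
  exists l : list (X -> Prop), forall A, Fm A -> exists B, In B l /\ set_eq A B.

Definition inter (X : Type) (A B : X -> Prop) : X -> Prop := fun x => A x /\ B x.

Definition translate (G X : Type) (act : G -> X -> X) (g : G) (A : X -> Prop) : X -> Prop :=
  fun x => exists a, A a /\ x = act g a.

Definition G_invariant (G X : Type) (act : G -> X -> X) (F : (X -> Prop) -> Prop) : Prop :=
  forall A g, F A -> F (translate act g A).

Definition upward_directed (X : Type) (F : (X -> Prop) -> Prop) : Prop :=
  forall A C, F A -> (forall x, A x -> C x) -> F C.

Definition F_disjoint (X : Type) (F Fp : (X -> Prop) -> Prop) : Prop :=
  forall A B, Fp A -> Fp B -> ~ set_eq A B -> ~ F (inter A B).

Definition F_packing_large (G X : Type) (act : G -> X -> X)
  (F Fp : (X -> Prop) -> Prop) : Prop :=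
  forall A, Fp A ->
    forall Fam : (X -> Prop) -> Prop,
      (forall B, Fam B -> exists g, set_eq B (translate act g A)) ->
      F_disjoint F Fam -> finite_family Fam.

Definition ramsey_m11_product (G : Type) (mul : G -> G -> G) (inv : G -> G)
  (R : G -> Prop) : Prop :=
  forall Y : G -> Prop, ~ finite_set Y ->
    exists y1 y2, Y y1 /\ Y y2 /\ y1 <> y2 /\
      R (mul (inv y1) y2) /\ R (mul (inv y2) y1).

Definition Delta (G X : Type) (act : G -> X -> X) (F : (X -> Prop) -> Prop)
  (A : X -> Prop) : G -> Prop :=
  fun g => F (inter (translate act g A) A).

(* Since [F] is closed under translation and under supersets, [F (gA ∩ hA)]
   holds iff [g⁻¹h ∈ Δ(A)]; so the Ramsey property of [Δ(A)] says exactly that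
   every infinite set of translates of [A] contains two members meeting in [F].
   For the family of translates this is the negation of being an infinite
   [F]-disjoint family; the only care needed is that distinct group elements
   may give the same translate, which a pigeonhole argument handles. *)

From Stdlib Require Import List Classical ClassicalEpsilon
  FunctionalExtensionality PropExtensionality.

Lemma set_eq_ext {X : Type} (A B : X -> Prop) : set_eq A B -> A = B.
Proof.
  intro HAB; apply functional_extensionality; intro x.
  apply propositional_extensionality, HAB.
Qed.

Lemma infinite_pigeonhole {T S : Type} (R : T -> S -> Prop) (l : list S)
  (Y : T -> Prop) :
  ~ finite_set Y -> (forall y, Y y -> exists2 s, In s l & R y s) ->
  exists y1 y2 s, Y y1 /\ Y y2 /\ y1 <> y2 /\ R y1 s /\ R y2 s.
Proof.
  revert Y; induction l as [|s l IH]; intros Y HYinf Hcov.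
  - exfalso; apply HYinf; exists nil; intros y Hy.
    now destruct (Hcov y Hy) as [? []].
  - destruct (classic
      (exists y1 y2, Y y1 /\ Y y2 /\ y1 <> y2 /\ R y1 s /\ R y2 s))
      as [[y1 [y2 Hs]] | Hs_single]; [now exists y1, y2, s |].
    (* At most one element of [Y] is sent to [s]; drop it and recurse. *)
    destruct (IH (fun y => Y y /\ ~ R y s)) as [y1 [y2 [s' Hs']]].
    + intros [l' Hl']; apply HYinf.
      destruct (classic (exists y0, Y y0 /\ R y0 s)) as [[y0 [Hy0 Ry0]] | Hnone].
      * exists (y0 :: l'); intros y Hy.
        destruct (classic (R y s)) as [Ry | Ry]; [| right; now apply Hl'].
        left; apply NNPP; intro Hne; apply Hs_single; now exists y0, y.
      * exists l'; intros y Hy; apply Hl'; split; [exact Hy |].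
        intro Ry; apply Hnone; now exists y.
    + intros y [Hy Ry]; destruct (Hcov y Hy) as [s' [<- | Hin] HR];
        [contradiction | now exists s'].
    + exists y1, y2, s'; tauto.
Qed.

Lemma finite_family_image {G X : Type} (f : G -> X -> Prop) (Y : G -> Prop)
  (Fam : (X -> Prop) -> Prop) :
  finite_set Y -> (forall B, Fam B -> exists g, Y g /\ set_eq B (f g)) ->
  finite_family Fam.
Proof.
  intros [l Hl] Himg; exists (map f l); intros B HB.
  destruct (Himg B HB) as [g [Hg HBg]].
  exists (f g); split; [apply in_map, Hl, Hg | exact HBg].
Qed.

Section Translates.
Context {G X : Type} {mul : G -> G -> G} {inv : G -> G} {e : G}
  {act : G -> X -> X}.
Hypotheses (HG : is_group mul inv e) (Hact : is_left_action mul e act).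

Lemma translate_mul g h A :
  set_eq (translate act (mul g h) A) (translate act g (translate act h A)).
Proof.
  destruct Hact as [_ Hmul]; intro x; split.
  - intros [a [Ha ->]]; exists (act h a); split; [now exists a | apply Hmul].
  - intros [b [[a [Ha ->]] ->]]; exists a; split; [exact Ha | symmetry; apply Hmul].
Qed.

Lemma translate_unit A : set_eq (translate act e A) A.
Proof.
  destruct Hact as [Hunit _]; intro x; split.
  - now intros [a [Ha ->]]; rewrite Hunit.
  - intro Hx; exists x; now rewrite Hunit.
Qed.

Lemma translate_inter_sub k B C x :
  translate act k (inter B C) x -> inter (translate act k B) (translate act k C) x.
Proof. intros [a [[HBa HCa] ->]]; split; now exists a. Qed.

Context {F : (X -> Prop) -> Prop}.
Hypotheses (Hinv : G_invariant act F) (Hup : upward_directed F).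

Lemma F_inter_comm A B : F (inter A B) -> F (inter B A).
Proof. intro HAB; apply (Hup _ _ HAB); now intros x [? ?]. Qed.

Lemma F_inter_translate k B C :
  F (inter B C) -> F (inter (translate act k B) (translate act k C)).
Proof. intro HBC; apply (Hup _ _ (Hinv _ k HBC)), translate_inter_sub. Qed.

Lemma F_inter_translate_iff_Delta g h A :
  F (inter (translate act g A) (translate act h A)) <->
  Delta act F A (mul (inv g) h).
Proof.
  destruct HG as [Hassoc [Hmul1 [_ [HinvK HmulV]]]].
  unfold Delta; split; intro HF.
  - apply F_inter_comm, F_inter_translate with (k := inv g) in HF.
    apply (Hup _ _ HF); intros x [Hh Hg]; split.
    + now apply translate_mul.
    + apply (translate_unit A x); rewrite <- (HinvK g); now apply translate_mul.
  - apply F_inter_comm, F_inter_translate with (k := g) in HF.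
    apply (Hup _ _ HF); intros x [Hg Hh]; split; [exact Hg |].
    apply translate_mul in Hh; now rewrite <- Hassoc, HmulV, Hmul1 in Hh.
Qed.

Lemma Delta_pair_iff y1 y2 A :
  Delta act F A (mul (inv y1) y2) /\ Delta act F A (mul (inv y2) y1) <->
  F (inter (translate act y1 A) (translate act y2 A)).
Proof.
  rewrite <- !F_inter_translate_iff_Delta; split.
  - now intros [H12 _].
  - intro H12; split; [exact H12 | now apply F_inter_comm].
Qed.

Lemma ramsey_Delta_of_packing_large :
  F_packing_large act F F ->
  forall A, F A -> ramsey_m11_product mul inv (Delta act F A).
Proof.
  intros Hpack A HA Y HYinf; apply NNPP; intro Hno.
  assert (Hsep : forall y1 y2, Y y1 -> Y y2 -> y1 <> y2 ->
            ~ F (inter (translate act y1 A) (translate act y2 A))).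
  { intros y1 y2 Hy1 Hy2 Hne HF; apply Hno; exists y1, y2.
    do 3 (split; [assumption |]); now apply Delta_pair_iff. }
  destruct (Hpack A HA (fun B => exists y, Y y /\ B = translate act y A))
    as [l Hl].
  - intros B [y [_ ->]]; now exists y.
  - intros B1 B2 [y1 [Hy1 ->]] [y2 [Hy2 ->]] Hneq; apply Hsep; auto.
    intros ->; apply Hneq; intro; reflexivity.
  - (* Only finitely many translates, so two distinct [y1, y2 ∈ Y] give the
       same translate, which lies in [F]. *)
    destruct (infinite_pigeonhole (fun y B => set_eq (translate act y A) B)
                l Y HYinf) as [y1 [y2 [B [Hy1 [Hy2 [Hne [HB1 HB2]]]]]]].
    + intros y Hy; destruct (Hl (translate act y A)) as [B [HB HyB]];
        [now exists y | now exists B].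
    + apply (Hsep y1 y2 Hy1 Hy2 Hne), (Hup (translate act y1 A)).
      * now apply Hinv.
      * intros x Hx; split; [exact Hx | now apply HB2, HB1].
Qed.

Lemma packing_large_of_ramsey_Delta :
  (forall A, F A -> ramsey_m11_product mul inv (Delta act F A)) ->
  F_packing_large act F F.
Proof.
  intros Hramsey A HA Fam Htransl Hdisj; apply NNPP; intro Hinf_fam.
  destruct (ClassicalEpsilon.choice
              (fun B g => Fam B -> set_eq B (translate act g A))) as [c Hc].
  { intro B; destruct (classic (Fam B)) as [HB | HB].
    - destruct (Htransl B HB) as [g Hg]; now exists g.
    - now exists e. }
  destruct (Hramsey A HA (fun g => exists B, Fam B /\ g = c B))
    as [y1 [y2 [[B1 [HB1 ->]] [[B2 [HB2 ->]] [Hne Hpair]]]]].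
  - intro Hfin; apply Hinf_fam.
    apply (finite_family_image (fun g => translate act g A) _ _ Hfin).
    intros B HB; exists (c B); split; [now exists B | now apply Hc].
  - apply Delta_pair_iff in Hpair.
    apply (Hdisj B1 B2 HB1 HB2).
    + intro H12; apply set_eq_ext in H12; subst; now apply Hne.
    + apply (Hup _ _ Hpair); intros x [Hx1 Hx2]; split; [apply Hc | apply Hc]; auto.
Qed.

End Translates.

Theorem proposition5p6 (G X : Type) (mul : G -> G -> G) (inv : G -> G) (e : G)
  (act : G -> X -> X) (F : (X -> Prop) -> Prop)
  (HG : is_group mul inv e) (Hact : is_left_action mul e act)
  (Hinf : infinite_type G)
  (Hinv : G_invariant act F) (Hup : upward_directed F) :
  F_packing_large act F F <->
  (forall A, F A -> ramsey_m11_product mul inv (Delta act F A)).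
Proof.
  split.
  - exact (ramsey_Delta_of_packing_large HG Hact Hinv Hup).
  - exact (packing_large_of_ramsey_Delta HG Hact Hinv Hup).
Qed.
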